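(* Let $N\ge 5$ and let $\mu_1,\dots,\mu_N$ be distinct real numbers. For $z\in\mathbb{C}\setminus\mathbb{R}$ define the vectors in $\mathbb{R}^N$ $$Y_1(z) := \left(\Re \frac{1}{\mu_j - z}\right)_{j=1}^N,\quad Y_2(z) := \left(\Re \frac{1}{(\mu_j - z)^2}\right)_{j=1}^N,\quad Y_3(z) := \left(\Im \frac{1}{(\mu_j - z)^2}\right)_{j=1}^N.$$ Then for every $z\in\mathbb{C}\setminus\mathbb{R}$, $Y_1(z)$ does not belong to the $\mathbb{R}$-linear span of $Y_2(z)$ and $Y_3(z)$. *)

From Stdlib Require Import Reals.
From Coquelicot Require Import Coquelicot.
Open Scope R_scope.

(* Coordinates j (0 <= j < N) of the vectors Y1(z), Y2(z), Y3(z) in R^N,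
   for a family mu : nat -> R of reals (only indices j < N matter). *)
Definition Y1 (mu : nat -> R) (z : C) (j : nat) : R :=
  Re (Cinv (Cminus (RtoC (mu j)) z)).
Definition Y2 (mu : nat -> R) (z : C) (j : nat) : R :=
  Re (Cinv (Cmult (Cminus (RtoC (mu j)) z) (Cminus (RtoC (mu j)) z))).
Definition Y3 (mu : nat -> R) (z : C) (j : nat) : R :=
  Im (Cinv (Cmult (Cminus (RtoC (mu j)) z) (Cminus (RtoC (mu j)) z))).

Definition in_span2 (N : nat) (v u w : nat -> R) : Prop :=
  exists a b : R, forall j : nat, (j < N)%nat -> v j = a * u j + b * w j.

(* Write t = mu_j - Re z, s = Im z and D = t^2 + s^2 > 0. Clearing the denominators D and D^2
   turns the j-th coordinate of Y1 = a Y2 + b Y3 into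
     t^3 - a t^2 + (s^2 - 2 b s) t + a s^2 = 0,
   a monic cubic in t whose coefficients do not depend on j. The distinct mu_j give distinct
   roots t, but a monic cubic has at most three roots (so four of the mu_j already suffice). *)

From Stdlib Require Import Reals Lra Psatz.
From Coquelicot Require Import Coquelicot.
Open Scope R_scope.

Definition cubic (p q r t : R) : R := t ^ 3 + p * t ^ 2 + q * t + r.

Lemma cubic_sub (p q r t u : R) :
  cubic p q r t - cubic p q r u = (t - u) * (t ^ 2 + t * u + u ^ 2 + p * (t + u) + q).
Proof. unfold cubic; ring. Qed.

Lemma cubic_root_sum (p q r t1 t2 t3 : R) :
  t1 <> t2 -> t1 <> t3 -> t2 <> t3 ->
  cubic p q r t1 = 0 -> cubic p q r t2 = 0 -> cubic p q r t3 = 0 ->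
  t1 + t2 + t3 = - p.
Proof.
  intros d12 d13 d23 h1 h2 h3.
  assert (q12 : t1 ^ 2 + t1 * t2 + t2 ^ 2 + p * (t1 + t2) + q = 0).
  { apply (Rmult_eq_reg_l (t1 - t2)); [|lra].
    rewrite Rmult_0_r, <- (cubic_sub p q r); lra. }
  assert (q13 : t1 ^ 2 + t1 * t3 + t3 ^ 2 + p * (t1 + t3) + q = 0).
  { apply (Rmult_eq_reg_l (t1 - t3)); [|lra].
    rewrite Rmult_0_r, <- (cubic_sub p q r); lra. }
  assert (h : (t2 - t3) * (t1 + t2 + t3 + p) = 0).
  { transitivity ((t1 ^ 2 + t1 * t2 + t2 ^ 2 + p * (t1 + t2) + q)
                  - (t1 ^ 2 + t1 * t3 + t3 ^ 2 + p * (t1 + t3) + q)); [ring | lra]. }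
  apply Rmult_integral in h; lra.
Qed.

Lemma cubic_no_four_roots (p q r t1 t2 t3 t4 : R) :
  t1 <> t2 -> t1 <> t3 -> t1 <> t4 -> t2 <> t3 -> t2 <> t4 -> t3 <> t4 ->
  cubic p q r t1 = 0 -> cubic p q r t2 = 0 ->
  cubic p q r t3 = 0 -> cubic p q r t4 = 0 -> False.
Proof.
  intros d12 d13 d14 d23 d24 d34 h1 h2 h3 h4.
  pose proof (cubic_root_sum p q r t1 t2 t3 d12 d13 d23 h1 h2 h3).
  pose proof (cubic_root_sum p q r t1 t2 t4 d12 d14 d24 h1 h2 h4).
  lra.
Qed.

Lemma Re_Cinv (w : C) : Re (/ w) = Re w / (Re w ^ 2 + Im w ^ 2).
Proof. reflexivity. Qed.

Lemma Im_Cinv (w : C) : Im (/ w) = - Im w / (Re w ^ 2 + Im w ^ 2).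
Proof. reflexivity. Qed.

Lemma sqr_norm_Cmult_self (w : C) :
  Re (w * w) ^ 2 + Im (w * w) ^ 2 = (Re w ^ 2 + Im w ^ 2) ^ 2.
Proof. destruct w as [u v]; simpl; ring. Qed.

Lemma Re_Cinv_sqr (w : C) : Re w ^ 2 + Im w ^ 2 <> 0 ->
  Re (/ (w * w)) = (Re w ^ 2 - Im w ^ 2) / (Re w ^ 2 + Im w ^ 2) ^ 2.
Proof.
  intros hw; rewrite Re_Cinv, sqr_norm_Cmult_self.
  destruct w as [u v]; cbn [Re Im fst snd Cmult] in *; field; exact hw.
Qed.

Lemma Im_Cinv_sqr (w : C) : Re w ^ 2 + Im w ^ 2 <> 0 ->
  Im (/ (w * w)) = - (2 * Re w * Im w) / (Re w ^ 2 + Im w ^ 2) ^ 2.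
Proof.
  intros hw; rewrite Im_Cinv, sqr_norm_Cmult_self.
  destruct w as [u v]; cbn [Re Im fst snd Cmult] in *; field; exact hw.
Qed.

Lemma Re_RtoC_sub (m : R) (z : C) : Re (RtoC m - z) = m - Re z.
Proof. destruct z; simpl; ring. Qed.

Lemma Im_RtoC_sub (m : R) (z : C) : Im (RtoC m - z) = - Im z.
Proof. destruct z; simpl; ring. Qed.

Lemma Rdiv_eq_clear (t d a b x y : R) : d <> 0 ->
  t / d = a * (x / d ^ 2) + b * (y / d ^ 2) -> t * d = a * x + b * y.
Proof.
  intros hd h.
  replace (t * d) with (d ^ 2 * (t / d)) by (field; exact hd).
  rewrite h; field; exact hd.
Qed.

Lemma Y_relation_cubic (mu : nat -> R) (z : C) (a b : R) (j : nat) : Im z <> 0 ->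
  Y1 mu z j = a * Y2 mu z j + b * Y3 mu z j ->
  cubic (- a) (Im z ^ 2 - 2 * b * Im z) (a * Im z ^ 2) (mu j - Re z) = 0.
Proof.
  intros hz h; unfold Y1, Y2, Y3 in h.
  assert (hw : Re (RtoC (mu j) - z) ^ 2 + Im (RtoC (mu j) - z) ^ 2 <> 0).
  { rewrite Im_RtoC_sub. pose proof (pow2_ge_0 (Re (RtoC (mu j) - z))).
    pose proof (pow2_gt_0 _ hz). nra. }
  rewrite Re_Cinv, Re_Cinv_sqr, Im_Cinv_sqr in h by exact hw.
  apply Rdiv_eq_clear in h; [|exact hw].
  rewrite Re_RtoC_sub, Im_RtoC_sub in h.
  unfold cubic; nra.
Qed.

Theorem lemma1p4 (N : nat) (mu : nat -> R)
  (HN : (5 <= N)%nat)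
  (Hdist : forall i j : nat, (i < N)%nat -> (j < N)%nat -> i <> j -> mu i <> mu j)
  (z : C) (Hz : Im z <> 0) :
  ~ in_span2 N (Y1 mu z) (Y2 mu z) (Y3 mu z).
Proof.
  intros [a [b h]].
  set (t j := mu j - Re z).
  assert (root : forall j, (j < N)%nat ->
    cubic (- a) (Im z ^ 2 - 2 * b * Im z) (a * Im z ^ 2) (t j) = 0).
  { intros j hj; exact (Y_relation_cubic mu z a b j Hz (h j hj)). }
  assert (t_inj : forall i j, (i < N)%nat -> (j < N)%nat -> i <> j -> t i <> t j).
  { intros i j hi hj hij; unfold t; pose proof (Hdist i j hi hj hij); lra. }
  apply (cubic_no_four_roots (- a) (Im z ^ 2 - 2 * b * Im z) (a * Im z ^ 2)
           (t 0%nat) (t 1%nat) (t 2%nat) (t 3%nat));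
    (apply t_inj || apply root); lia.
Qed.
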